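(* Let $X$ and $Y$ be closed subsets of $\mathbb{R}^n$. If $X$, $Y$ and $X\cup Y$ are $\ell_1$-convex, then so is $X\cap Y$.
   Context: A subset $Z\subseteq\mathbb{R}^n$ is $\ell_1$-convex if for all $z,z'\in Z$, with $D=\sum_i|z_i-z'_i|$, there is $\gamma\colon[0,D]\to Z$ with $\gamma(0)=z,\gamma(D)=z'$ and $\sum_i|\gamma_i(t)-\gamma_i(t')|=|t-t'|$ for all $t,t'$. *)

(* Points of R^n are row vectors 'rV[R]_n with the
   canonical (product = Euclidean) topology of MathComp-Analysis. *)
From HB Require Import structures.
From mathcomp Require Import all_boot all_order all_algebra.
From mathcomp Require Import all_classical all_reals all_analysis.
Set Implicit Arguments. Unset Strict Implicit. Unset Printing Implicit Defensive.
Import Order.TTheory GRing.Theory Num.Theory.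
Import numFieldTopology.Exports.
Local Open Scope ring_scope.
Local Open Scope classical_set_scope.

Definition l1dist {R : realType} {n : nat} (z z' : 'rV[R]_n) : R :=
  \sum_(i < n) `|z ord0 i - z' ord0 i|.

Definition l1_convex {R : realType} {n : nat} (Z : set 'rV[R]_n) : Prop :=
  forall z z', Z z -> Z z' ->
    let D := l1dist z z' in
    exists gamma : R -> 'rV[R]_n,
      [/\ gamma 0 = z, gamma D = z',
          (forall t, 0 <= t <= D -> Z (gamma t)) &
          (forall t t', 0 <= t <= D -> 0 <= t' <= D ->
             l1dist (gamma t) (gamma t') = `|t - t'|)].

(* Reflect the coordinates so that z <= z' coordinatewise.  The l1-geodesics
   from z to z' are then the monotone paths, so it suffices to find a chain of
   points of X `&` Y in the order interval [z, z'] on which the level function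
   c |-> |c - z|_1 takes every value of [0, |z' - z|_1].  Take a maximal such
   chain (Zorn).  Closedness makes it stable under suprema and infima, so a
   missing level would leave a gap a < b in the chain.  Walking a little from a
   towards b inside X and from b towards a inside Y, and joining the two
   endpoints by a geodesic in X `|` Y, yields a point of X `&` Y strictly
   between a and b, contradicting maximality. *)
From HB Require Import structures.
From mathcomp Require Import all_boot all_order all_algebra.
From mathcomp Require Import all_classical all_reals all_analysis.
From mathcomp Require Import lra.
Import numFieldTopology.Exports.
Local Open Scope classical_set_scope.
Import Order.TTheory GRing.Theory Num.Theory.
Local Open Scope ring_scope.

Section L1Distance.
Context {R : realType} {n : nat}.
Implicit Types (p q w x y : 'rV[R]_n) (S B : set 'rV[R]_n).

Lemma l1dist_ge0 p q : 0 <= l1dist p q.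
Proof. exact: sumr_ge0. Qed.

Lemma l1distxx p : l1dist p p = 0.
Proof. by apply: big1 => i _; rewrite subrr normr0. Qed.

Lemma l1distC p q : l1dist p q = l1dist q p.
Proof. by apply: eq_bigr => i _; rewrite distrC. Qed.

Lemma l1dist_triangle p q w : l1dist p w <= l1dist p q + l1dist q w.
Proof. by rewrite /l1dist -big_split; apply: ler_sum => i _; apply: ler_distD. Qed.

Lemma ler_coord_l1dist p q i : `|p ord0 i - q ord0 i| <= l1dist p q.
Proof. by rewrite /l1dist (bigD1 i) //= lerDl sumr_ge0. Qed.

Lemma l1dist_eq0 p q : l1dist p q = 0 -> p = q.
Proof.
move=> pq0; apply/rowP => i.
by apply/eqP; rewrite -subr_eq0 -normr_le0 -pq0 ler_coord_l1dist.
Qed.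

Lemma l1dist_le_approx {B p q t} :
  (forall e, 0 < e -> exists2 w, B w & l1dist q w < e) ->
  (forall w, B w -> l1dist p w <= t) -> l1dist p q <= t.
Proof.
move=> approx Bt; apply/ler_addgt0Pr => e /approx[w Bw qw].
by have := l1dist_triangle p w q; have := Bt w Bw; rewrite (l1distC w); lra.
Qed.

Lemma l1dist_ge_approx {B p q t} :
  (forall e, 0 < e -> exists2 w, B w & l1dist q w < e) ->
  (forall w, B w -> t <= l1dist p w) -> t <= l1dist p q.
Proof.
move=> approx Bt; apply/ler_addgt0Pr => e /approx[w Bw qw].
by have := l1dist_triangle p q w; have := Bt w Bw; lra.
Qed.

Definition l1_closed S :=
  forall p, (forall e, 0 < e -> exists2 q, S q & l1dist p q < e) -> S p.

Lemma closed_l1_closed {S} : closed S -> l1_closed S.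
Proof.
move=> /closure_id cS p approx; rewrite cS => B /nbhs_ballP [e e0 ballB].
have [q Sq pq] := approx e e0; exists q; split=> //; apply: ballB; split=> // i j.
by rewrite [i]ord1 /ball /=; apply: le_lt_trans (ler_coord_l1dist p q j) pq.
Qed.

Lemma l1_closedI S S' : l1_closed S -> l1_closed S' -> l1_closed (S `&` S').
Proof.
by move=> cS cS' p approx; split; [apply: cS|apply: cS'] => e /approx[q [Sq S'q] pq];
  exists q.
Qed.

Definition l1_between p w q := l1dist p w + l1dist w q = l1dist p q.

Lemma l1_betweenC {p w q} : l1_between p w q -> l1_between q w p.
Proof. by rewrite /l1_between addrC (l1distC w p) (l1distC q w) (l1distC q p). Qed.

Lemma l1_between_coord {x w y} : l1_between x w y -> forall i,
  `|x ord0 i - w ord0 i| + `|w ord0 i - y ord0 i| = `|x ord0 i - y ord0 i|.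
Proof.
rewrite /l1_between /l1dist -big_split /= => xwy i; apply/eqP; rewrite -subr_eq0.
pose gap j := `|x ord0 j - w ord0 j| + `|w ord0 j - y ord0 j| - `|x ord0 j - y ord0 j|.
apply/eqP; apply: (@psumr_eq0P _ _ predT gap _ _ i) => // [j _|].
  by rewrite subr_ge0 ler_distD.
by rewrite sumrB xwy subrr.
Qed.

Lemma l1_geodesic_between {g : R -> 'rV[R]_n} {p q t} :
  g 0 = p -> g (l1dist p q) = q ->
  (forall t t', 0 <= t <= l1dist p q -> 0 <= t' <= l1dist p q ->
     l1dist (g t) (g t') = `|t - t'|) ->
  0 <= t <= l1dist p q -> l1dist p (g t) = t /\ l1_between p (g t) q.
Proof.
move=> g0 gD giso /andP[t0 tD]; have D0 := l1dist_ge0 p q.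
have in0 : 0 <= (0 : R) <= l1dist p q by rewrite lexx.
have inD : 0 <= l1dist p q <= l1dist p q by apply/andP.
have int : 0 <= t <= l1dist p q by rewrite t0.
have pg : l1dist p (g t) = t by rewrite -{1}g0 giso // sub0r normrN ger0_norm.
split=> //; rewrite /l1_between pg -[X in _ + l1dist _ X]gD giso //.
by rewrite distrC ger0_norm ?subr_ge0 // addrC subrK.
Qed.

End L1Distance.

Lemma dist_add_eq_ge_min {R : realDomainType} (a b c : R) :
  `|a - b| + `|b - c| = `|a - c| -> Num.min a c <= b.
Proof.
rewrite ge_min; case: (leP a b) => // ba; case: (leP c b) => //= bc.
rewrite gtr0_norm ?subr_gt0 // ltr0_norm ?subr_lt0 //.
by case: (ler0P (a - c)) => _; lra.
Qed.

Section Orientation.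
Context {R : realType} {n : nat}.
Implicit Types (s : 'I_n -> R) (p q r w x y z : 'rV[R]_n).

(* The l1-geodesics between two points are the paths that are monotone in
   every coordinate; [ole s] is the product order after flipping the signs of
   the coordinates according to the sign vector [s]. *)
Definition orientation s := forall i, `|s i| = 1.
Definition ocoord s p i := s i * p ord0 i.
Definition ole s p q := forall i, ocoord s p i <= ocoord s q i.

Lemma orientationN {s} : orientation s -> orientation (\- s).
Proof. by move=> hs i; rewrite normrN. Qed.

Lemma ocoordN s p i : ocoord (\- s) p i = - ocoord s p i.
Proof. exact: mulNr. Qed.

Lemma oleN s p q : ole (\- s) p q <-> ole s q p.
Proof. by split=> pq i; move: (pq i); rewrite !ocoordN lerN2. Qed.

Lemma ole_refl s p : ole s p p.
Proof. by []. Qed.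

Lemma ole_trans s p q r : ole s p q -> ole s q r -> ole s p r.
Proof. by move=> pq qr i; apply: le_trans (pq i) (qr i). Qed.

Lemma exists_orientation_ole z z' : exists2 s, orientation s & ole s z z'.
Proof.
exists (fun i => if z ord0 i <= z' ord0 i then 1 else -1) => i /=.
  by case: ifP; rewrite ?normrN normr1.
rewrite /ocoord; case: (leP (z ord0 i) (z' ord0 i)) => [zz'|/ltW z'z].
  by rewrite !mul1r.
by rewrite !mulN1r lerN2.
Qed.

Context {s : 'I_n -> R} (hs : orientation s).

Lemma dist_ocoord p q i :
  `|ocoord s p i - ocoord s q i| = `|p ord0 i - q ord0 i|.
Proof. by rewrite /ocoord -mulrBr normrM hs mul1r. Qed.

Lemma ocoord_row (f : 'I_n -> R) i : ocoord s (\row_j (s j * f j)) i = f i.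
Proof.
by rewrite /ocoord mxE mulrA -expr2 -real_normK ?num_real // hs expr1n mul1r.
Qed.

Lemma l1dist_ole p q :
  ole s p q -> l1dist p q = \sum_i (ocoord s q i - ocoord s p i).
Proof.
move=> pq; apply: eq_bigr => i _.
by rewrite -dist_ocoord distrC ger0_norm // subr_ge0.
Qed.

Lemma ole_l1_between {p q r} : ole s p q -> ole s q r -> l1_between p q r.
Proof.
move=> pq qr; rewrite /l1_between !l1dist_ole //; last exact: ole_trans qr.
by rewrite -big_split; apply: eq_bigr => i _ /=; rewrite addrC addrA subrK.
Qed.

Lemma ole_anti {p q} : ole s p q -> ole s q p -> p = q.
Proof.
move=> pq qp; apply: l1dist_eq0; rewrite l1dist_ole //.
by apply: big1 => i _; apply/eqP; rewrite subr_eq0 eq_le pq qp.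
Qed.

Lemma comparable_l1dist {z p q} : ole s z p -> ole s z q ->
  ole s p q \/ ole s q p -> l1dist p q = `|l1dist z p - l1dist z q|.
Proof.
move=> zp zq [pq|qp].
- rewrite -(ole_l1_between zp pq) opprD addrA subrr add0r normrN.
  by rewrite ger0_norm ?l1dist_ge0.
- rewrite -(ole_l1_between zq qp) addrAC subrr add0r l1distC.
  by rewrite ger0_norm ?l1dist_ge0.
Qed.

Lemma l1_between_ocoord_min {x w y} : l1_between x w y -> forall i,
  Num.min (ocoord s x i) (ocoord s y i) <= ocoord s w i.
Proof.
by move=> /l1_between_coord xwy i; apply: dist_add_eq_ge_min; rewrite !dist_ocoord.
Qed.

Lemma ole_l1_between_le {p x w y} :
  ole s p x -> ole s p y -> l1_between x w y -> ole s p w.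
Proof.
move=> px py /l1_between_ocoord_min xwy i; apply: le_trans (xwy i).
by rewrite le_min px py.
Qed.

Lemma l1_closed_ole_ge u : l1_closed [set c | ole s u c].
Proof.
move=> a approx i; apply/ler_addgt0Pr => e /approx[c uc ac].
apply: le_trans (uc i) _; rewrite -lerBlDl; apply: le_trans (ler_norm _) _.
rewrite dist_ocoord distrC; apply: ltW; apply: le_lt_trans ac.
exact: ler_coord_l1dist.
Qed.

End Orientation.

Lemma l1_closed_ole_le {R : realType} {n} {s : 'I_n -> R} u :
  orientation s -> l1_closed [set c : 'rV[R]_n | ole s c u].
Proof.
move=> hs; have -> : [set c | ole s c u] = [set c | ole (\- s) u c].
  by apply/seteqP; split=> c /oleN.
exact: l1_closed_ole_ge (orientationN hs) u.
Qed.

Lemma l1_between_ole {R : realType} {n} {s : 'I_n -> R} {p w q : 'rV[R]_n} :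
  orientation s -> ole s p q -> l1_between p w q -> ole s p w /\ ole s w q.
Proof.
move=> hs pq pwq; split; first exact: (ole_l1_between_le hs (ole_refl s p) pq pwq).
apply/oleN; apply: (ole_l1_between_le (orientationN hs) (ole_refl _ q) _ (l1_betweenC pwq)).
exact/oleN.
Qed.

Section CrossingPoint.
Context {R : realType} {n : nat} {X Y : set 'rV[R]_n}.
Hypotheses (cX : closed X) (cY : closed Y).

(* The first time at which the path is in [Y] is a limit of times at which it
   is in [Y] and, unless it is [0], of earlier times at which it is in [X]. *)
Lemma isometric_path_meet (g : R -> 'rV[R]_n) (D : R) : 0 <= D ->
  (forall t t', 0 <= t <= D -> 0 <= t' <= D -> l1dist (g t) (g t') = `|t - t'|) ->
  (forall t, 0 <= t <= D -> X (g t) \/ Y (g t)) -> X (g 0) -> Y (g D) ->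
  exists2 t, 0 <= t <= D & X (g t) /\ Y (g t).
Proof.
move=> D0 giso gXY X0 YD.
pose T := [set t | 0 <= t <= D /\ Y (g t)].
have TD : T D by split; rewrite ?lexx ?D0.
have lbT0 : lbound T 0 by move=> t [/andP[]].
have hlT : has_lbound T by exists 0.
have t0_ge0 : 0 <= inf T := lb_le_inf (ex_intro _ D TD) lbT0.
have t0_lb : lbound T (inf T) := ge_inf hlT.
have t0_in : 0 <= inf T <= D by rewrite t0_ge0 t0_lb.
exists (inf T) => //; split; last first.
  apply: (closed_l1_closed cY) => e e0.
  have [t [tin Yt] te] := inf_adherent e0 (conj (ex_intro _ D TD) hlT).
  by exists (g t) => //; rewrite giso // ler0_norm ?subr_le0 ?t0_lb //; lra.
have [->|t0_neq0] := eqVneq (inf T) 0; first exact: X0.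
have Xbelow t : 0 <= t < inf T -> X (g t).
  move=> /andP[t_ge0 t_lt]; have tin : 0 <= t <= D.
    by rewrite t_ge0 (le_trans (ltW t_lt)) // t0_lb.
  case: (gXY t tin) => // Yt.
  by have := t0_lb t (conj tin Yt); rewrite leNgt t_lt.
apply: (closed_l1_closed cX) => e e0.
have t0_gt0 : 0 < inf T by rewrite lt_def t0_neq0 t0_ge0.
have [t /andP[t_ge0 t_lt] te] : exists2 t, 0 <= t < inf T & inf T - t < e.
  case: (lerP (e / 2) (inf T)) => h; [exists (inf T - e / 2) | exists 0];
    try (apply/andP; split); lra.
have tin : 0 <= t <= D by rewrite t_ge0 (le_trans (ltW t_lt)) ?t0_lb.
exists (g t); first by apply: Xbelow; rewrite t_ge0.
by rewrite giso // ger0_norm // subr_ge0 ltW.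
Qed.

Lemma l1_convexU_between {x y} : l1_convex (X `|` Y) -> X x -> Y y ->
  exists w, [/\ X w, Y w & l1_between x w y].
Proof.
move=> cvXY Xx Yy.
have [g [g0 gD gXY giso]] := cvXY x y (or_introl Xx) (or_intror Yy).
have [t tin [Xt Yt]] := isometric_path_meet _ _ (l1dist_ge0 x y) giso gXY
  (eq_ind_r X Xx g0) (eq_ind_r Y Yy gD).
by exists (g t); split=> //; have [] := l1_geodesic_between g0 gD giso tin.
Qed.

End CrossingPoint.

Lemma exists_pos_lt_pos_values {R : realType} {n} (f : 'I_n -> R) (d : R) :
  0 < d -> exists2 e, 0 < e <= d & forall i, 0 < f i -> e < f i.
Proof.
move=> d0; pose m := \big[Num.min/d]_(i | 0 < f i) f i.
have m0 : 0 < m by apply: lt_bigmin.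
have md : m <= d := bigmin_le_id _ _ _ _.
exists (m / 2) => [|i fi0]; first by apply/andP; split; lra.
by have : m <= f i := bigmin_le_cond d f fi0; lra.
Qed.

(* If [x] leaves [p], it moves some coordinate in which [q] is ahead of [p], by
   the hypothesis on [e] farther than [e] ahead; [y] is within [e] of [q], so it
   is ahead of [p] in that coordinate too, and so is every [w] between them. *)
Lemma l1_between_ocoord_gt {R : realType} {n} {s : 'I_n -> R} {p q x y w : 'rV[R]_n}
    {e : R} : orientation s ->
  (forall i, ocoord s p i < ocoord s q i -> e < ocoord s q i - ocoord s p i) ->
  ole s p x -> ole s x q -> ole s y q -> 0 < l1dist p x -> l1dist y q <= e ->
  l1_between x w y -> exists i, ocoord s p i < ocoord s w i.
Proof.
move=> hs egap px xq yq px0 yqe xwy.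
have [i pxi] : exists i, ocoord s p i < ocoord s x i.
  apply/not_existsP => xp.
  have xp_eq : x = p by apply: (ole_anti hs) px => i; rewrite leNgt; exact/negP/xp.
  by move: px0; rewrite xp_eq l1distxx ltxx.
exists i; apply: lt_le_trans (l1_between_ocoord_min hs xwy i); rewrite lt_min pxi /=.
have yqi := ler_coord_l1dist y q i; rewrite -(dist_ocoord hs) in yqi.
have := egap i (lt_le_trans pxi (xq i)); have := yq i.
by move: yqi; rewrite ler0_norm ?subr_le0 //; lra.
Qed.

Section InteriorPoint.
Context {R : realType} {n : nat} {X Y : set 'rV[R]_n}.
Hypotheses (cX : closed X) (cY : closed Y).
Hypotheses (cvX : l1_convex X) (cvY : l1_convex Y) (cvXY : l1_convex (X `|` Y)).

(* Walk a distance [e] from [p] towards [q] inside [X] and from [q] towards [p]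
   inside [Y], then meet [X `&` Y] between the two endpoints; [e] is smaller
   than every nonzero gap between the coordinates of [p] and [q]. *)
Lemma l1_convexI_interior {s p q} : orientation s ->
  (X `&` Y) p -> (X `&` Y) q -> ole s p q -> p != q ->
  exists r, [/\ (X `&` Y) r, ole s p r, ole s r q, r != p & r != q].
Proof.
move=> hs [Xp Yp] [Xq Yq] pq neq_pq; set D := l1dist p q.
have D0 : 0 < D.
  by rewrite lt_def l1dist_ge0 andbT; apply: contra neq_pq => /eqP/l1dist_eq0->.
have [e /andP[e0 eD] egap] :=
  exists_pos_lt_pos_values (fun i => ocoord s q i - ocoord s p i) _ D0.
have egap' i : ocoord s p i < ocoord s q i -> e < ocoord s q i - ocoord s p i.
  by rewrite -subr_gt0; apply: egap.
have [g [g0 gD gX giso]] := cvX p q Xp Xq.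
have [h [h0 hD hY hiso]] := cvY p q Yp Yq.
have ein : 0 <= e <= D by rewrite ltW.
have Dein : 0 <= D - e <= D by apply/andP; split; lra.
set x := g e; set y := h (D - e).
have [px pxq] := l1_geodesic_between g0 gD giso ein.
have [py pyq] := l1_geodesic_between h0 hD hiso Dein.
have yq : l1dist y q = e by move: pyq; rewrite /l1_between py -/D; lra.
have [[px_le xq_le] [py_le yq_le]] := (l1_between_ole hs pq pxq, l1_between_ole hs pq pyq).
have [w [Xw Yw xwy]] := l1_convexU_between cX cY cvXY (gX e ein) (hY _ Dein).
have pw_le : ole s p w := ole_l1_between_le hs px_le py_le xwy.
have wq_le : ole s w q.
  apply/oleN; apply: (ole_l1_between_le (orientationN hs) _ _ (l1_betweenC xwy));
    exact/oleN.
exists w; split=> //.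
- have px0 : 0 < l1dist p x by rewrite px.
  have yqe : l1dist y q <= e by rewrite yq.
  have [i] := l1_between_ocoord_gt hs egap' px_le xq_le yq_le px0 yqe xwy.
  by apply: contraTneq => ->; rewrite ltxx.
- have egapN i : ocoord (\- s) q i < ocoord (\- s) p i ->
      e < ocoord (\- s) p i - ocoord (\- s) q i.
    by rewrite !ocoordN opprK addrC ltrN2; apply: egap'.
  have qy_le : ole (\- s) q y by apply/oleN.
  have yp_le : ole (\- s) y p by apply/oleN.
  have xp_le : ole (\- s) x p by apply/oleN.
  have qy0 : 0 < l1dist q y by rewrite l1distC yq.
  have xpe : l1dist x p <= e by rewrite l1distC px.
  have [i] := l1_between_ocoord_gt (orientationN hs) egapN qy_le yp_le xp_le
    qy0 xpe (l1_betweenC xwy).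
  by apply: contraTneq => ->; rewrite ltxx.
Qed.

End InteriorPoint.

Section ChainSup.
Context {R : realType} {n : nat} {s : 'I_n -> R} (hs : orientation s).
Implicit Types (B : set 'rV[R]_n) (a c u : 'rV[R]_n).

Lemma chain_ocoord_gt B (g : 'I_n -> R) : B !=set0 -> total_on B (ole s) ->
  (forall i, exists2 c, B c & g i < ocoord s c i) ->
  exists2 c, B c & forall i, g i < ocoord s c i.
Proof.
move=> [c0 Bc0] totB gB.
suff [c Bc cg] : exists2 c, B c & forall i, i \in enum 'I_n -> g i < ocoord s c i.
  by exists c => // i; apply: cg; rewrite mem_enum.
elim: (enum 'I_n) => [|j js [c Bc cg]]; first by exists c0.
have [cj Bcj gj] := gB j.
have [ccj|cjc] := totB c cj Bc Bcj.
- exists cj => // i; rewrite in_cons => /orP[/eqP-> //|/cg gi].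
  exact: lt_le_trans gi (ccj i).
- exists c => // i; rewrite in_cons => /orP[/eqP->|/cg //].
  exact: lt_le_trans gj (cjc j).
Qed.

Lemma chain_sup {B u} : B !=set0 -> total_on B (ole s) ->
  (forall c, B c -> ole s c u) ->
  exists a, [/\ forall c, B c -> ole s c a,
    forall d, (forall c, B c -> ole s c d) -> ole s a d &
    forall e, 0 < e -> exists2 c, B c & l1dist a c < e].
Proof.
move=> neB totB Bu.
pose E i := [set ocoord s c i | c in B].
have neE i : E i !=set0 by have [c Bc] := neB; exists (ocoord s c i), c.
have supE i : has_sup (E i).
  by split=> //; exists (ocoord s u i) => _ [c Bc <-]; apply: Bu.
exists (\row_j (s j * sup (E j))); split.
- by move=> c Bc i; rewrite ocoord_row //; apply: sup_upper_bound => //; exists c.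
- by move=> d Bd i; rewrite ocoord_row //; apply: ge_sup => // _ [c Bc <-]; apply: Bd.
move=> e e0; set a := \row_j _; pose e' := e / n.+1%:R.
have e'0 : 0 < e' by rewrite divr_gt0 ?ltr0n.
have [c Bc ca] : exists2 c, B c & forall i, ocoord s a i - e' < ocoord s c i.
  apply: chain_ocoord_gt => // i; rewrite ocoord_row //.
  by have [_ [c Bc <-] ?] := sup_adherent e'0 (supE i); exists c.
exists c => //; rewrite l1distC (l1dist_ole hs); last first.
  by move=> i; rewrite ocoord_row //; apply: sup_upper_bound => //; exists c.
apply: (@le_lt_trans _ _ (e' *+ n)).
  rewrite -[n in e' *+ n]card_ord -sumr_const; apply: ler_sum => i _.
  by have := ca i; lra.
have : e' *+ n.+1 = e by rewrite -mulr_natr divfK ?pnatr_eq0.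
by rewrite mulrS; lra.
Qed.

End ChainSup.

Section MaximalChain.
Context {R : realType} {n : nat}.
Implicit Types (s : 'I_n -> R) (S A B : set 'rV[R]_n) (a b c r u z : 'rV[R]_n).

Definition maximal_chain s S A := [/\ A `<=` S, total_on A (ole s) &
  forall r, S r -> (forall c, A c -> ole s c r \/ ole s r c) -> A r].

Lemma exists_maximal_chain s S : exists A, maximal_chain s S A.
Proof.
pose chain A := A `<=` S /\ total_on A (ole s).
have [A [[AS totA] maxA]] : exists A, chain A /\ forall B, A `<` B -> ~ chain B.
  apply: Zorn_bigcup => F Fchain totF; split=> [c [A FA /(proj1 (Fchain A FA))] //|].
  move=> c c' [A FA Ac] [A' FA' A'c'].
  have [AA'|A'A] := totF A A' FA FA'.
  - exact: (proj2 (Fchain A' FA')) (AA' c Ac) A'c'.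
  - exact: (proj2 (Fchain A FA)) Ac (A'A c' A'c').
exists A; split=> // r Sr rA; apply: contrapT => Anr.
apply: (maxA (A `|` [set r])); first by split=> [c|/(_ r (or_intror erefl))]; [left|].
split=> [c [/AS|->] //|c c' [Ac|->] [Ac'|->]]; first exact: totA.
- exact: rA.
- by have [] := rA c' Ac'; [right|left].
- by left.
Qed.

Lemma maximal_chainN {s S A} : maximal_chain s S A -> maximal_chain (\- s) S A.
Proof.
move=> [AS totA maxA]; split=> // [c c' Ac Ac'|r Sr rA].
  by have [] := totA c' c Ac' Ac => h; [left|right]; apply/oleN.
by apply: maxA => // c Ac; have [] := rA c Ac => /oleN; [right|left].
Qed.

Lemma maximal_chain_sup {s S A B u} : orientation s -> maximal_chain s S A ->
  l1_closed S -> B `<=` A -> B !=set0 -> (forall c, B c -> ole s c u) ->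
  exists a, [/\ A a, forall c, B c -> ole s c a,
    forall d, (forall c, B c -> ole s c d) -> ole s a d &
    forall e, 0 < e -> exists2 c, B c & l1dist a c < e].
Proof.
move=> hs [AS totA maxA] cS BA neB Bu.
have totB : total_on B (ole s) by move=> c c' /BA Ac /BA Ac'; apply: totA.
have [a [Ba least approx]] := chain_sup hs neB totB Bu.
exists a; split=> //; apply: maxA => [|c Ac].
  by apply: cS => e /approx[c /BA/AS Sc ac]; exists c.
have [[b Bb cb]|cB] := pselect (exists2 b, B b & ole s c b).
  by left; apply: ole_trans cb (Ba b Bb).
right; apply: least => b Bb.
have [//|cb] := totA b c (BA b Bb) Ac.
by exfalso; apply: cB; exists b.
Qed.

(* [a] is the supremum of the part of [A] below level [t], [b] the infimum of
   the part above it. *)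
Lemma maximal_chain_cut {s S A z z' t} : orientation s -> l1_closed S ->
  maximal_chain s S A -> (forall c, S c -> ole s z c /\ ole s c z') ->
  A z -> A z' -> 0 <= t <= l1dist z z' ->
  exists a b, [/\ A a /\ A b, l1dist z a <= t <= l1dist z b, ole s a b &
    forall c, A c -> ole s c a \/ ole s b c].
Proof.
move=> hs cS hA Sbox Az Az' /andP[t0 tD]; have [AS totA _] := hA.
have box c : A c -> ole s z c /\ ole s c z' by move=> /AS/Sbox.
pose Lo := [set c | A c /\ l1dist z c <= t].
pose Up := [set c | A c /\ t <= l1dist z c].
have LoA : Lo `<=` A by move=> c [].
have UpA : Up `<=` A by move=> c [].
have Loz : Lo z by split; rewrite // l1distxx.
have [a [Aa Loa leasta approxa]] := maximal_chain_sup hs hA cS LoA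
  (ex_intro _ z Loz) (fun c Loc => (box c (LoA c Loc)).2).
have [b [Ab Upb greatb approxb]] := maximal_chain_sup (orientationN hs)
  (maximal_chainN hA) cS UpA (ex_intro _ z' (conj Az' tD))
  (fun c Upc => (oleN _ _ _).2 (box c (UpA c Upc)).1).
exists a, b; split=> //.
- rewrite (l1dist_le_approx approxa) ?(l1dist_ge_approx approxb) //.
  + by move=> c [].
  + by move=> c [].
- apply/oleN/greatb => c' [Ac' tc']; apply/oleN/leasta => c [Ac ct].
  have [//|c'c] := totA c c' Ac Ac'.
  suff -> : c = c' by [].
  have c'c0 := l1dist_ge0 c' c.
  have := ole_l1_between hs (box c' Ac').1 c'c; rewrite /l1_between => zc.
  by apply/esym/l1dist_eq0; lra.
- move=> c Ac; have [ct|tc] := lerP (l1dist z c) t; first by left; apply: Loa.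
  by right; apply/oleN/Upb; split=> //; apply: ltW.
Qed.

End MaximalChain.

Section Levels.
Context {R : realType} {n : nat} {X Y : set 'rV[R]_n}.
Hypotheses (cX : closed X) (cY : closed Y).
Hypotheses (cvX : l1_convex X) (cvY : l1_convex Y) (cvXY : l1_convex (X `|` Y)).

Lemma maximal_chain_level {s A z z'} : orientation s ->
  maximal_chain s (X `&` Y `&` [set c | ole s z c] `&` [set c | ole s c z']) A ->
  A z -> A z' -> forall t, 0 <= t <= l1dist z z' -> exists2 c, A c & l1dist z c = t.
Proof.
set S := _ `&` _ => hs hA Az Az' t tin; have [AS _ maxA] := hA.
have cS : l1_closed S.
  apply: l1_closedI; last exact: l1_closed_ole_le.
  apply: l1_closedI; last exact: l1_closed_ole_ge.
  by apply: closed_l1_closed; apply: closedI.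
have Sbox c : S c -> ole s z c /\ ole s c z' by move=> [[_ zc] cz'].
have [a [b [[Aa Ab] /andP[za_le zb_ge] ab cut]]] :=
  maximal_chain_cut hs cS hA Sbox Az Az' tin.
have [|za_neq] := eqVneq (l1dist z a) t; first by exists a.
have [[[XYa za] _] [[XYb _] bz']] := (AS a Aa, AS b Ab).
have neq_ab : a != b.
  by apply: contra_neq za_neq => eq_ab; apply/eqP; rewrite eq_le za_le eq_ab zb_ge.
have [r [XYr ar rb neq_ra neq_rb]] :=
  l1_convexI_interior cX cY cvX cvY cvXY hs XYa XYb ab neq_ab.
have Ar : A r.
  apply: maxA; first by split; [split|]; [|apply: ole_trans za ar|apply: ole_trans rb bz'].
  by move=> c /cut[ca|bc]; [left; apply: ole_trans ca ar|right; apply: ole_trans rb bc].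
have [ra|br] := cut r Ar.
- by move: neq_ra; rewrite (ole_anti hs ra ar) eqxx.
- by move: neq_rb; rewrite (ole_anti hs rb br) eqxx.
Qed.

End Levels.

Lemma chain_l1_geodesic {R : realType} {n} {s : 'I_n -> R} {A : set 'rV[R]_n} {z z'} :
  orientation s -> total_on A (ole s) ->
  (forall c, A c -> ole s z c /\ ole s c z') ->
  (forall t, 0 <= t <= l1dist z z' -> exists2 c, A c & l1dist z c = t) ->
  exists gamma : R -> 'rV[R]_n,
    [/\ gamma 0 = z, gamma (l1dist z z') = z',
        (forall t, 0 <= t <= l1dist z z' -> A (gamma t)) &
        (forall t t', 0 <= t <= l1dist z z' -> 0 <= t' <= l1dist z z' ->
           l1dist (gamma t) (gamma t') = `|t - t'|)].
Proof.
move=> hs totA box level.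
pose gamma t := xget z [set c | A c /\ l1dist z c = t].
have gammaP t : 0 <= t <= l1dist z z' -> A (gamma t) /\ l1dist z (gamma t) = t.
  move=> /level[c Ac zc].
  by apply: (@xgetPex _ z [set c | A c /\ l1dist z c = t]); exists c.
have in0 : 0 <= (0 : R) <= l1dist z z' by rewrite lexx l1dist_ge0.
have inD : 0 <= l1dist z z' <= l1dist z z' by rewrite lexx l1dist_ge0.
exists gamma; split=> [|||t t' /gammaP[At zt] /gammaP[At' zt']].
- by have [_ /l1dist_eq0] := gammaP 0 in0.
- have [AD zD] := gammaP _ inD; apply: l1dist_eq0.
  by have := ole_l1_between hs (box _ AD).1 (box _ AD).2; rewrite /l1_between zD; lra.
- by move=> t /gammaP[].
- by rewrite (comparable_l1dist hs (box _ At).1 (box _ At').1) ?zt ?zt' //; apply: totA.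
Qed.

Theorem lemma1p13 (R : realType) (n : nat) (X Y : set 'rV[R]_n) :
  closed X -> closed Y ->
  l1_convex X -> l1_convex Y -> l1_convex (X `|` Y) ->
  l1_convex (X `&` Y).
Proof.
move=> cX cY cvX cvY cvXY z z' XYz XYz'.
have [s hs zz'] := exists_orientation_ole z z'.
set S := X `&` Y `&` [set c | ole s z c] `&` [set c | ole s c z'].
have [A hA] := exists_maximal_chain s S; have [AS totA maxA] := hA.
have box c : A c -> ole s z c /\ ole s c z' by move=> /AS[[_ zc] cz'].
have Az : A z by apply: maxA => [|c /box[zc _]]; [split; [split|] | right].
have Az' : A z' by apply: maxA => [|c /box[_ cz']]; [split; [split|] | left].
have [g [g0 gD gA giso]] := chain_l1_geodesic hs totA box
  (maximal_chain_level cX cY cvX cvY cvXY hs hA Az Az').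
by exists g; split=> // t /gA/AS[[]].
Qed.
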